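(* Let $G$ be a graph and let $v, w, x$ be vertices of $G$ such that $v$ is adjacent only to $w$, and $w$ is adjacent only to $v$ and $x$. If $F$ is a minimal fort of $G$ with $v, w \in F$, then $F \setminus \{v, w, x\}$ is a minimal fort of $G - \{v, w, x\}$.
   Context: A fort of a graph $G$ is a nonempty set $F\subseteq V(G)$ such that every vertex outside $F$ is adjacent to either zero or at least two vertices of $F$; it is minimal if no proper subset is a fort. *)

(* A simple graph G is a symmetric irreflexive relation
   e : rel T on a finite vertex type T. *)
From mathcomp Require Import all_boot.
Set Implicit Arguments. Unset Strict Implicit. Unset Printing Implicit Defensive.

Section Forts.
Variable T : finType.

Definition nbhd (e : rel T) (u : T) : {set T} := [set y | e u y].

(* F is a fort of the induced subgraph G[U]: F is a nonempty set of vertices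
   of G[U], and every vertex of G[U] outside F is adjacent (in G[U]) to
   either zero or at least two vertices of F. *)
Definition fort_in (e : rel T) (U F : {set T}) : bool :=
  [&& F != set0, F \subset U &
      [forall u in U :\: F,
         (#|(nbhd e u :&: U) :&: F| == 0) || (2 <= #|(nbhd e u :&: U) :&: F|)]].

Definition minimal_fort_in (e : rel T) (U F : {set T}) : bool :=
  fort_in e U F && [forall F' : {set T}, (F' \proper F) ==> ~~ fort_in e U F'].

Definition fort (e : rel T) (F : {set T}) : bool := fort_in e setT F.
Definition minimal_fort (e : rel T) (F : {set T}) : bool :=
  minimal_fort_in e setT F.

End Forts.

From mathcomp Require Import all_boot.

(* Put S = {v, w, x}.  Minimality forces x outside F: otherwise F - w would
   still be a fort, since both neighbours v and x of w stay in it.  No vertex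
   outside S is adjacent to v or w, so F - S inherits the fort condition from
   F, and it is nonempty because x, having the neighbour w in F, needs a second
   one.  Conversely, a fort F' of G - S lifts to a fort of G strictly inside F:
   F' itself if x has no neighbour in F', and F' + {v, w} otherwise, as x then
   sees both w and a vertex of F'. *)

Set Implicit Arguments.
Unset Strict Implicit.
Unset Printing Implicit Defensive.

Section FortCalculus.
Variables (T : finType) (e : rel T).
Implicit Types (U F A B C D : {set T}) (u y : T).

Lemma fort_inP U F :
  reflect [/\ F != set0, F \subset U &
             forall u, u \in U -> u \notin F -> #|nbhd e u :&: F| != 1]
          (fort_in e U F).
Proof.
have zero_or_ge2 n : (n == 0) || (2 <= n) = (n != 1) by case: n => [|[|]].
apply: (iffP and3P) => -[F0 sFU fortF]; split=> //.
  move=> u uU uF; have := forallP fortF u.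
  by rewrite in_setD uF uU -setIA (setIidPr sFU) zero_or_ge2.
apply/forallP => u; apply/implyP; rewrite in_setD => /andP[uF uU].
by rewrite -setIA (setIidPr sFU) zero_or_ge2 fortF.
Qed.

Lemma fortP F :
  reflect (F != set0 /\ forall u, u \notin F -> #|nbhd e u :&: F| != 1)
          (fort e F).
Proof.
apply: (iffP (fort_inP _ _)) => [[F0 _ fortF] | [F0 fortF]]; split=> //.
- by move=> u; apply: fortF; rewrite inE.
- by move=> u _; apply: fortF.
Qed.

Lemma minimal_fort_in_fort U F : minimal_fort_in e U F -> fort_in e U F.
Proof. by case/andP. Qed.

Lemma minimal_fort_in_proper U F F' :
  minimal_fort_in e U F -> F' \proper F -> ~~ fort_in e U F'.
Proof. by case/andP=> _ /forallP/(_ F')/implyP. Qed.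

Lemma fort_in_restrict U F :
  fort e F -> (forall u y, u \in U -> y \in F :\: U -> ~~ e u y) ->
  F :&: U != set0 -> fort_in e U (F :&: U).
Proof.
move=> /fortP[_ fortF] noedge FU0; apply/fort_inP; split=> // [|u uU].
  exact: subsetIr.
rewrite in_setI uU andbT => uF.
suff -> : nbhd e u :&: (F :&: U) = nbhd e u :&: F by apply: fortF.
rewrite setIA; apply/setIidPl/subsetP => y; rewrite !inE => /andP[euy yF].
by apply: contraTT euy => yU; apply: noedge; rewrite ?inE ?yU ?yF.
Qed.

Lemma fort_setU U F A :
  fort_in e U F -> (forall u y, u \in U -> y \in A -> ~~ e u y) ->
  (forall u, u \notin U -> u \notin A -> #|nbhd e u :&: (F :|: A)| != 1) ->
  fort e (F :|: A).
Proof.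
move=> /fort_inP[F0 _ fortF] noedge fortA; apply/fortP; split.
  by apply: contraNneq F0 => /eqP; rewrite setU_eq0 => /andP[].
move=> u; rewrite inE negb_or => /andP[uF uA].
have [uU | /fortA] := boolP (u \in U); last exact.
suff NuA : nbhd e u :&: A = set0 by rewrite setIUr NuA setU0 fortF.
apply/setP => y; rewrite !inE; case yA: (y \in A); rewrite ?andbF //.
by rewrite (negbTE (noedge _ _ uU yA)).
Qed.

Lemma proper_setU_setD B C D A :
  B \proper C :\: D -> A \subset C :&: D -> B :|: A \proper C.
Proof.
move=> /properP[sBCD [z zCD zB]]; rewrite subsetI => /andP[sAC sAD].
apply/properP; split.
  by rewrite subUset sAC andbT (subset_trans sBCD) ?subsetDl.
exists z; first by move: zCD; rewrite inE => /andP[].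
rewrite inE negb_or zB /=; apply: contraTN zCD => /(subsetP sAD) zD.
by rewrite inE zD.
Qed.

Hypotheses (esym : symmetric e) (eirr : irreflexive e).

Lemma fort_setD1 F w :
  fort e F -> w \in F -> nbhd e w \subset F -> #|nbhd e w| != 1 ->
  F :\ w != set0 -> fort e (F :\ w).
Proof.
move=> /fortP[_ fortF] wF sNF degw Fw0; apply/fortP; split=> // u.
rewrite in_setD1 negb_and negbK => /orP[/eqP-> | uF].
  by rewrite (setIidPl _) // subsetD1 sNF inE eirr.
suff -> : nbhd e u :&: (F :\ w) = nbhd e u :&: F by apply: fortF.
rewrite setIDA; apply/setDidPl; rewrite disjoint_sym disjoints1 !inE wF andbT.
by apply: contra uF => euw; apply: (subsetP sNF); rewrite inE esym.
Qed.

Section PendantPath.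
Variables (v w x : T).
Hypotheses (xv : x != v) (Nv : nbhd e v = [set w]) (Nw : nbhd e w = [set v; x]).

Local Notation S := [set v; w; x].

Lemma adj_pendant y : e v y = (y == w).
Proof. by rewrite -in_set1 -Nv inE. Qed.

Lemma adj_pendant_neighbour y : e w y = (y == v) || (y == x).
Proof. by rewrite -in_set2 -Nw inE. Qed.

Lemma pendant_neq_neighbour : v != w.
Proof. by apply/eqP => vw; have := eirr v; rewrite {2}vw adj_pendant eqxx. Qed.

Lemma neighbour_neq_x : w != x.
Proof. by apply/eqP => wx; have := eirr w; rewrite {2}wx adj_pendant_neighbour eqxx orbT. Qed.

Lemma nbhd_pendant_sub u : u \in [set v; w] -> nbhd e u \subset S.
Proof. by rewrite !inE => /orP[]/eqP->; rewrite ?Nv ?Nw ?subUset !sub1set !inE !eqxx ?orbT. Qed.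

Lemma nonadj_pendant u y : u \notin S -> y \in [set v; w] -> ~~ e u y.
Proof.
move=> uS yvw; apply: contra uS; rewrite esym => eyu.
by apply: (subsetP (nbhd_pendant_sub yvw)); rewrite inE.
Qed.

Lemma fort_in_lift_isolated F' :
  fort_in e (~: S) F' -> nbhd e x :&: F' = set0 -> fort e F'.
Proof.
move=> fortF' NxF'0; have /fort_inP[_ sF'S _] := fortF'.
rewrite -[F']setU0; apply: (fort_setU fortF') => [u y _ | u]; first by rewrite inE.
rewrite setU0 in_setC negbK => uS _.
have [uvw | ] := boolP (u \in [set v; w]).
  suff /eqP-> : nbhd e u :&: F' == set0 by rewrite cards0.
  rewrite setI_eq0 disjoint_sym disjoints_subset (subset_trans sF'S) //.
  by rewrite setCS nbhd_pendant_sub.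
by move: uS; rewrite !inE -orbA => /or3P[]/eqP->; rewrite ?eqxx ?orbT // NxF'0 cards0.
Qed.

Lemma fort_in_lift_pendant F' y :
  fort_in e (~: S) F' -> y \in nbhd e x :&: F' -> fort e (F' :|: [set v; w]).
Proof.
move=> fortF'; have /fort_inP[_ sF'S _] := fortF'.
rewrite !inE => /andP[exy yF']; apply: (fort_setU fortF') => [u z | u].
  by rewrite inE; apply: nonadj_pendant.
rewrite !inE negbK => /orP[uvw /negP // | /eqP-> _].
have yw : y != w.
  by apply: contraTneq (subsetP sF'S _ yF') => ->; rewrite !inE eqxx orbT.
have : [set w; y] \subset nbhd e x :&: (F' :|: [set v; w]).
  by rewrite subUset !sub1set !inE esym adj_pendant_neighbour exy yF' !eqxx !orbT.
by move/subset_leq_card; rewrite cards2 eq_sym yw; case: ltngtP.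
Qed.

Lemma fort_in_lift F' :
  fort_in e (~: S) F' ->
  exists2 A : {set T}, A \subset [set v; w] & fort e (F' :|: A).
Proof.
move=> fortF'; have [NxF'0 | /set0Pn[y NxF'y]] := eqVneq (nbhd e x :&: F') set0.
  by exists set0; rewrite ?sub0set // setU0 fort_in_lift_isolated.
by exists [set v; w]; rewrite ?subxx // (fort_in_lift_pendant fortF' NxF'y).
Qed.

Variable F : {set T}.
Hypotheses (minF : minimal_fort e F) (vF : v \in F) (wF : w \in F).

Lemma x_notin_fort : x \notin F.
Proof.
apply/negP => xF; apply: (negP (minimal_fort_in_proper minF (properD1 wF))).
apply: fort_setD1 => //.
- exact: minimal_fort_in_fort.
- by rewrite Nw subUset !sub1set vF xF.
- by rewrite Nw cards2 (eq_sym v) xv.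
- by apply/set0Pn; exists v; rewrite !inE pendant_neq_neighbour.
Qed.

Lemma fort_setD_pendant_neq0 : F :\: S != set0.
Proof.
have /fortP[_ /(_ x x_notin_fort) degx] := minimal_fort_in_fort minF.
have wNx : w \in nbhd e x :&: F by rewrite !inE esym adj_pendant_neighbour eqxx orbT.
have : ~~ (nbhd e x :&: F \subset [set w]).
  apply: contra degx => /subset_leq_card; rewrite cards1 eqn_leq => ->.
  by rewrite card_gt0; apply/set0Pn; exists w.
case/subsetPn => y; rewrite !inE => /andP[exy yF] yw; apply/set0Pn; exists y.
have yv : y != v.
  by apply: contraNneq neighbour_neq_x => yv; move: exy; rewrite yv esym adj_pendant eq_sym.
have yx : y != x by apply: contraTneq exy => ->; rewrite eirr.
by rewrite !inE yF (negbTE yw) (negbTE yv) (negbTE yx).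
Qed.

Lemma fort_in_setD_pendant : fort_in e (~: S) (F :\: S).
Proof.
rewrite setDE; apply: fort_in_restrict; rewrite -?setDE ?fort_setD_pendant_neq0 //.
  exact: minimal_fort_in_fort.
move=> u y; rewrite in_setC setDE setCK in_setI => uS /andP[yF yS].
apply: nonadj_pendant uS _; move: yS yF; rewrite !inE -orbA.
by case/or3P=> /eqP->; rewrite ?eqxx ?orbT // (negbTE x_notin_fort).
Qed.

End PendantPath.
End FortCalculus.

Theorem mainTheorem11 (T : finType) (e : rel T)
  (esym : symmetric e) (eirr : irreflexive e)
  (v w x : T) (Hxv : x != v)
  (Hv : nbhd e v = [set w]) (Hw : nbhd e w = [set v; x])
  (F : {set T}) (HF : minimal_fort e F) (HvF : v \in F) (HwF : w \in F) :
  minimal_fort_in e (~: [set v; w; x]) (F :\: [set v; w; x]).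
Proof.
apply/andP; split; first exact: fort_in_setD_pendant.
apply/forallP => F'; apply/implyP => ltF'F; apply/negP => fortF'.
have [A sAvw fortF'A] := fort_in_lift esym Hv Hw fortF'.
have ltF'AF : F' :|: A \proper F.
  apply: proper_setU_setD ltF'F (subset_trans sAvw _).
  by rewrite subsetI !subUset !sub1set HvF HwF !inE !eqxx ?orbT.
exact: negP (minimal_fort_in_proper HF ltF'AF) fortF'A.
Qed.
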